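(* Let $t$ be a deterministic process term of the process algebra $P_{\mathrm{PA}}$ (described in the context) and let $\sigma_1,\sigma_2$ be closed substitutions such that $\mathbf d(\sigma_1(x),\sigma_2(x))<1$ for every state variable $x$. Then \[ \mathbf d(\sigma_1(t),\sigma_2(t)) \le \mathrm{dda}\bigl(\llbracket t\rrbracket_{\mathcal M},\mathbf d(\sigma_1,\sigma_2)\bigr). \]
   Context: Probabilistic transition systems and bisimilarity metric. A signature $\Sigma$ is a countable set of operators $f$, each with an arity $r(f)\in\mathbb N$. Fix disjoint countably infinite sets $\mathcal V_s$ of state variables and $\mathcal V_d$ of distribution variables; $\mathcal V=\mathcal V_s\cup\mathcal V_d$. Open (state) terms are built from state variables and operators; closed terms (processes) $T(\Sigma)$ contain no variables. $\Delta(T(\Sigma))$ is the set of discrete probability distributions on $T(\Sigma)$, $\delta_t$ is the Dirac distribution at $t$, and for distributions $\pi_1,\dots,\pi_{r(f)}$, $f(\pi_1,\dots,\pi_{r(f)})$ is the distribution assigning $f(t_1,\dots,t_{r(f)})$ probability $\prod_i\pi_i(t_i)$. Distribution terms are: distribution variables $\mu$, $\delta(t)$ for state terms $t$, convex combinations $\sum_{i\in I}q_i\theta_i$ ($q_i\in(0,1]$, $\sum q_i=1$), and $f(\theta_1,\dots,\theta_{r(f)})$. A closed substitution $\sigma$ maps state variables to closed terms and distribution variables to distributions; it extends homomorphically to state terms and to distribution terms via $\sigma(\delta(t))=\delta_{\sigma(t)}$, $\sigma(\sum q_i\theta_i)=\sum q_i\sigma(\theta_i)$, $\sigma(f(\theta_1,\dots))=f(\sigma(\theta_1),\dots)$.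 A PTS is $(T(\Sigma),A,\to)$ with $A$ a countable set of actions and $\to\subseteq T(\Sigma)\times A\times\Delta(T(\Sigma))$; write $t\xrightarrow{a}\pi$, and $\mathit{der}(t,a)=\{\pi\mid t\xrightarrow a\pi\}$. A PGSOS rule has the form $\dfrac{\{x_i\xrightarrow{a_{i,m}}\mu_{i,m}\mid i\in I,m\in M_i\}\ \ \{x_i\not\xrightarrow{b_{i,n}}\mid i\in I,n\in N_i\}}{f(x_1,\dots,x_{r(f)})\xrightarrow{a}\theta}$ with $I=\{1,\dots,r(f)\}$, finite $M_i,N_i$, pairwise distinct $x_i\in\mathcal V_s$, pairwise distinct $\mu_{i,m}\in\mathcal V_d$, and $\theta$ a distribution term whose variables are among the $x_i$ and $\mu_{i,m}$. A PTSS $(\Sigma,A,R)$ with $R$ a countable set of PGSOS rules determines a unique supported model: $t\xrightarrow a\pi$ iff for some rule and closed substitution $\sigma$, $\sigma(x_i)\xrightarrow{a_{i,m}}\sigma(\mu_{i,m})$ for all positive premises, $\sigma(x_i)$ has no $b_{i,n}$-transition for all negative premises, $\sigma(f(x_1,\dots))=t$ and $\sigma(\theta)=\pi$. For $d:T(\Sigma)\times T(\Sigma)\to[0,1]$, the Kantorovich lifting is $K(d)(\pi,\pi')=\min_{\omega}\sum_{t,t'}d(t,t')\omega(t,t')$ over couplings $\omega$ of $\pi,\pi'$; the Hausdorff lifting is $H(\hat d)(\Pi_1,\Pi_2)=\max\{\sup_{\pi_1\in\Pi_1}\inf_{\pi_2\in\Pi_2}\hat d(\pi_1,\pi_2),\sup_{\pi_2\in\Pi_2}\inf_{\pi_1\in\Pi_1}\hat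 d(\pi_2,\pi_1)\}$ with $\inf\emptyset=1$, $\sup\emptyset=0$. Let $B(d)(t,t')=\sup_{a\in A}H(K(d))(\mathit{der}(t,a),\mathit{der}(t',a))$. The bisimilarity metric $\mathbf d$ is the least fixed point of $B$ on $[0,1]^{T(\Sigma)\times T(\Sigma)}$ ordered pointwise (equivalently the least 1-bounded pseudometric $d$ such that whenever $d(t,t')<1$ and $t\xrightarrow a\pi$ there is $t'\xrightarrow a\pi'$ with $K(d)(\pi,\pi')\le d(t,t')$). The process algebra $P_{\mathrm{PA}}$: operators are the constant $0$, for each $a\in A$, $n\ge1$, $q_1,\dots,q_n\in(0,1]$ with $\sum q_i=1$ the $n$-ary prefix $a.\bigoplus_{i=1}^n[q_i]\_$ (written $a.\_$ when $n=1$), binary $+$, and binary $\|_B$ for each $B\subseteq A$ ($\|$ denotes $\|_A$). Rules: $a.\bigoplus_{i}[q_i]x_i\xrightarrow a\sum_i q_i\delta(x_i)$; from $x_1\xrightarrow a\mu_1$ infer $x_1+x_2\xrightarrow a\mu_1$; from $x_2\xrightarrow a\mu_2$ infer $x_1+x_2\xrightarrow a\mu_2$; for $a\in B$ from $x_1\xrightarrow a\mu_1$, $x_2\xrightarrow a\mu_2$ infer $x_1\|_Bx_2\xrightarrow a\mu_1\|_B\mu_2$; for $a\notin B$ from $x_1\xrightarrow a\mu_1$ infer $x_1\|_Bx_2\xrightarrow a\mu_1\|_B\delta(x_2)$ and from $x_2\xrightarrow a\mu_2$ infer $x_1\|_Bx_2\xrightarrow a\delta(x_1)\|_B\mu_2$.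 Deterministic process terms are the open terms built only from $0$, state variables, $a.\_$ and $\|$. Multiplicities: $\mathcal M$ is the set of maps $m:\mathcal V\to\mathbb N\cup\{\infty\}$; $0$ is the zero map and $n_V$ ($V\subseteq\mathcal V$) maps $x\in V$ to $n$ and other variables to $0$; $1_x=1_{\{x\}}$. For deterministic terms: $\llbracket0\rrbracket_{\mathcal M}=0$, $\llbracket x\rrbracket_{\mathcal M}=1_x$, $\llbracket t_1\|t_2\rrbracket_{\mathcal M}(x)=\llbracket t_1\rrbracket_{\mathcal M}(x)+\llbracket t_2\rrbracket_{\mathcal M}(x)$, $\llbracket a.t\rrbracket_{\mathcal M}=\llbracket t\rrbracket_{\mathcal M}$. $\mathcal E$ is the set of maps $e:\mathcal V\to[0,1)$. $\mathrm{dda}(m,e)=1-\prod_{x\in\mathcal V}(1-e(x))^{m(x)}$ (with $c^\infty=0$ for $0\le c<1$ and $1^\infty=1$). For closed substitutions, $\mathbf d(\sigma_1,\sigma_2)\in\mathcal E$ is $x\mapsto\mathbf d(\sigma_1(x),\sigma_2(x))$. *)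

From Stdlib Require Fin.
From Stdlib Require Import Reals Lra List.
From Stdlib Require Import ClassicalDescription.
Import ListNotations.
Open Scope R_scope.

Fixpoint fin_sum (n : nat) : (Fin.t n -> R) -> R :=
  match n with
  | O => fun _ => 0
  | S m => fun f => f Fin.F1 + fin_sum m (fun i => f (Fin.FS i))
  end.

Set Implicit Arguments.

Definition wf_weights (n : nat) (q : Fin.t (S n) -> R) : Prop :=
  (forall i, 0 < q i <= 1) /\ fin_sum (S n) q = 1.

Lemma wf_weights_one : @wf_weights 0 (fun _ => 1).
Proof. split; [intros; lra | simpl; lra]. Qed.

(* ---------- closed terms T(Sigma) of P_PA over action type A ----------
   Pref a n q Hq p  =  a.(+)_{i=1}^{n+1} [q_i] p_i
   Plus p1 p2       =  p1 + p2
   Par B p1 p2      =  p1 ||_B p2   (B a subset of A)                     *)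
Inductive proc (A : Type) : Type :=
| Nil : proc A
| Pref : A -> forall (n : nat) (q : Fin.t (S n) -> R),
           @wf_weights n q -> (Fin.t (S n) -> proc A) -> proc A
| Plus : proc A -> proc A -> proc A
| Par : (A -> Prop) -> proc A -> proc A -> proc A.
Arguments Nil {A}.

Definition dist (A : Type) := proc A -> R.

Definition dirac (A : Type) (t : proc A) : dist A :=
  fun u => if excluded_middle_informative (u = t) then 1 else 0.

Definition pref_dist (A : Type) (n : nat) (q : Fin.t (S n) -> R)
  (p : Fin.t (S n) -> proc A) : dist A :=
  fun u => fin_sum (S n) (fun i => q i * dirac (p i) u).

Definition par_dist (A : Type) (B : A -> Prop) (pi1 pi2 : dist A) : dist A :=
  fun u => match u with
           | Par B' u1 u2 =>
               if excluded_middle_informative (B' = B) then pi1 u1 * pi2 u2 else 0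
           | _ => 0
           end.

(* ---------- the PTS induced by the PGSOS rules of P_PA ----------
   (all rules are positive, so the unique supported model is the
    inductively generated transition relation) *)
Inductive step (A : Type) : proc A -> A -> dist A -> Prop :=
| st_pref : forall a (n : nat) (q : Fin.t (S n) -> R) (Hq : @wf_weights n q) (p : Fin.t (S n) -> proc A), step (Pref a Hq p) a (pref_dist q p)
| st_plusL : forall x1 x2 a mu, step x1 a mu -> step (Plus x1 x2) a mu
| st_plusR : forall x1 x2 a mu, step x2 a mu -> step (Plus x1 x2) a mu
| st_sync : forall (B : A -> Prop) x1 x2 a mu1 mu2,
    B a -> step x1 a mu1 -> step x2 a mu2 ->
    step (Par B x1 x2) a (par_dist B mu1 mu2)
| st_parL : forall (B : A -> Prop) x1 x2 a mu1,
    ~ B a -> step x1 a mu1 -> step (Par B x1 x2) a (par_dist B mu1 (dirac x2))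
| st_parR : forall (B : A -> Prop) x1 x2 a mu2,
    ~ B a -> step x2 a mu2 -> step (Par B x1 x2) a (par_dist B (dirac x1) mu2).

Definition der (A : Type) (t : proc A) (a : A) : dist A -> Prop := step t a.

Definition lsum (X : Type) (s : list X) (f : X -> R) : R :=
  fold_right (fun x acc => f x + acc) 0 s.

(* ---------- Kantorovich lifting ----------
   A coupling of pi and pi' is a (finitely supported) omega with marginals
   pi and pi'; s1, s2 are duplicate-free lists containing its support.     *)
Definition coupling (A : Type) (pi pi' : dist A) (s1 s2 : list (proc A))
  (omega : proc A -> proc A -> R) : Prop :=
  NoDup s1 /\ NoDup s2 /\
  (forall t t', 0 <= omega t t') /\
  (forall t t', ~ (In t s1 /\ In t' s2) -> omega t t' = 0) /\
  (forall t, In t s1 -> lsum s2 (omega t) = pi t) /\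
  (forall t, ~ In t s1 -> pi t = 0) /\
  (forall t', In t' s2 -> lsum s1 (fun t => omega t t') = pi' t') /\
  (forall t', ~ In t' s2 -> pi' t' = 0).

Definition coupling_cost (A : Type) (d : proc A -> proc A -> R)
  (s1 s2 : list (proc A)) (omega : proc A -> proc A -> R) : R :=
  lsum s1 (fun t => lsum s2 (fun t' => d t t' * omega t t')).

Definition Kant (A : Type) (d : proc A -> proc A -> R) (pi pi' : dist A) (v : R) : Prop :=
  (exists s1 s2 omega, coupling pi pi' s1 s2 omega /\ coupling_cost d s1 s2 omega = v) /\
  (forall s1 s2 omega, coupling pi pi' s1 s2 omega -> v <= coupling_cost d s1 s2 omega).

(* ---------- sup / inf with sup(empty) = 0, inf(empty) = 1 ---------- *)
Definition is_glb (S : R -> Prop) (v : R) : Prop :=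
  (forall c, S c -> v <= c) /\ (forall b, (forall c, S c -> b <= c) -> b <= v).

Definition is_sup (S : R -> Prop) (v : R) : Prop :=
  ((~ exists c, S c) /\ v = 0) \/ ((exists c, S c) /\ is_lub S v).

Definition is_inf (S : R -> Prop) (v : R) : Prop :=
  ((~ exists c, S c) /\ v = 1) \/ ((exists c, S c) /\ is_glb S v).

Definition Haus (A : Type) (d : proc A -> proc A -> R) (P1 P2 : dist A -> Prop) (v : R) : Prop :=
  exists v1 v2,
    is_sup (fun c => exists pi1, P1 pi1 /\
              is_inf (fun k => exists pi2, P2 pi2 /\ Kant d pi1 pi2 k) c) v1 /\
    is_sup (fun c => exists pi2, P2 pi2 /\
              is_inf (fun k => exists pi1, P1 pi1 /\ Kant d pi2 pi1 k) c) v2 /\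
    v = Rmax v1 v2.

Definition Bfun (A : Type) (d : proc A -> proc A -> R) (t t' : proc A) (v : R) : Prop :=
  is_sup (fun c => exists a : A, Haus d (der t a) (der t' a) c) v.

Definition bounded01 (A : Type) (d : proc A -> proc A -> R) : Prop :=
  forall t t', 0 <= d t t' <= 1.

Definition is_B_fixpoint (A : Type) (d : proc A -> proc A -> R) : Prop :=
  forall t t', Bfun d t t' (d t t').

Definition is_bisim_metric (A : Type) (d : proc A -> proc A -> R) : Prop :=
  bounded01 d /\ is_B_fixpoint d /\
  (forall d', bounded01 d' -> is_B_fixpoint d' -> forall t t', d t t' <= d' t t').

(* ---------- deterministic open process terms ----------
   built from 0, state variables (indexed by nat), a._ and || (= ||_A) *)
Inductive dterm (A : Type) : Type :=
| DVar : nat -> dterm A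
| DNil : dterm A
| DPref : A -> dterm A -> dterm A
| DPar : dterm A -> dterm A -> dterm A.

Fixpoint dsubst (A : Type) (sigma : nat -> proc A) (t : dterm A) : proc A :=
  match t with
  | DVar _ x => sigma x
  | DNil _ => Nil
  | DPref a t1 => Pref a wf_weights_one (fun _ => dsubst sigma t1)
  | DPar t1 t2 => Par (fun _ : A => True) (dsubst sigma t1) (dsubst sigma t2)
  end.

(* [[t]]_M restricted to state variables (it is 0 on distribution
   variables, and finite-valued for deterministic terms) *)
Fixpoint mult (A : Type) (t : dterm A) : nat -> nat :=
  match t with
  | DVar _ x => fun y => if Nat.eqb x y then 1%nat else 0%nat
  | DNil _ => fun _ => 0%nat
  | DPref _ t1 => mult t1
  | DPar t1 t2 => fun y => (mult t1 y + mult t2 y)%nat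
  end.

Fixpoint vbound (A : Type) (t : dterm A) : nat :=
  match t with
  | DVar _ x => S x
  | DNil _ => 0%nat
  | DPref _ t1 => vbound t1
  | DPar t1 t2 => Nat.max (vbound t1) (vbound t2)
  end.

Fixpoint prod_upto (n : nat) (f : nat -> R) : R :=
  match n with
  | O => 1
  | S k => prod_upto k f * f k
  end.

(* dda(m,e) = 1 - prod_x (1 - e x)^(m x), for m supported on {0..n-1}
   (all other factors are (1 - e x)^0 = 1) *)
Definition dda (m : nat -> nat) (n : nat) (e : nat -> R) : R :=
  1 - prod_upto n (fun x => (1 - e x) ^ (m x)).

(* The bisimilarity metric d is the least fixed point of the bisimulation functional B, so by
   Park's principle it lies below every prefix point of B.  Prefixing is non-expansive and 0 is
   at distance 0 from itself, directly from the fixpoint equation.  A step of p1 || p2 is a pair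
   of synchronised steps of p1 and p2; matching both in q1 and q2 and coupling the derivatives
   independently shows that min(d, 1 - (1 - d(p1,q1)) (1 - d(p2,q2))) is a prefix point, hence
   1 - d(p1 || p2, q1 || q2) >= (1 - d(p1,q1)) (1 - d(p2,q2)).  Along a deterministic term these
   agreement factors multiply to 1 - dda.  Since the Kantorovich lifting is defined as an attained
   minimum, optimal couplings must exist; this follows from a vertex argument for linear costs on
   the transport polytope. *)

From Stdlib Require Import Reals Lra Lia List Permutation ClassicalDescription FinFun Eqdep_dec FunctionalExtensionality.
From Stdlib Require ClassicalEpsilon.
Import ListNotations.
Open Scope R_scope.

Section ListSums.
Context {X : Type}.
Implicit Types (s : list X) (f g : X -> R).

Lemma lsum_nil f : lsum [] f = 0. Proof. reflexivity. Qed.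

Lemma lsum_cons a s f : lsum (a :: s) f = f a + lsum s f. Proof. reflexivity. Qed.

Lemma lsum_app s1 s2 f : lsum (s1 ++ s2) f = lsum s1 f + lsum s2 f.
Proof. induction s1 as [|a s IH]; cbn [app]; rewrite ?lsum_cons, ?lsum_nil, ?IH; ring. Qed.

Lemma lsum_ext s f g : (forall x, In x s -> f x = g x) -> lsum s f = lsum s g.
Proof.
  induction s as [|a s IH]; intros H; [reflexivity|].
  rewrite !lsum_cons, H, IH; [reflexivity| |left]; auto using in_cons.
Qed.

Lemma lsum_plus s f g : lsum s (fun x => f x + g x) = lsum s f + lsum s g.
Proof. induction s as [|a s IH]; rewrite ?lsum_cons, ?lsum_nil, ?IH; ring. Qed.

Lemma lsum_minus s f g : lsum s (fun x => f x - g x) = lsum s f - lsum s g.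
Proof. induction s as [|a s IH]; rewrite ?lsum_cons, ?lsum_nil, ?IH; ring. Qed.

Lemma lsum_scal_l s c f : lsum s (fun x => c * f x) = c * lsum s f.
Proof. induction s as [|a s IH]; rewrite ?lsum_cons, ?lsum_nil, ?IH; ring. Qed.

Lemma lsum_scal_r s c f : lsum s (fun x => f x * c) = lsum s f * c.
Proof. induction s as [|a s IH]; rewrite ?lsum_cons, ?lsum_nil, ?IH; ring. Qed.

Lemma lsum_eq0 s f : (forall x, In x s -> f x = 0) -> lsum s f = 0.
Proof.
  induction s as [|a s IH]; intros H; [reflexivity|].
  rewrite lsum_cons, H, IH; [ring| |left]; auto using in_cons.
Qed.

Lemma lsum_le s f g : (forall x, In x s -> f x <= g x) -> lsum s f <= lsum s g.
Proof.
  induction s as [|a s IH]; intros H; rewrite ?lsum_cons, ?lsum_nil; [lra|].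
  apply Rplus_le_compat; [apply H; left|apply IH]; auto using in_cons.
Qed.

Lemma lsum_ge0 s f : (forall x, In x s -> 0 <= f x) -> 0 <= lsum s f.
Proof. intros H. rewrite <- (lsum_eq0 s (fun _ => 0)) by auto. apply lsum_le; auto. Qed.

Lemma lsum_ge0_eq0 s f : (forall x, In x s -> 0 <= f x) -> lsum s f = 0 ->
  forall x, In x s -> f x = 0.
Proof.
  induction s as [|a s IH]; intros H Hs x Hx; [destruct Hx|]. rewrite lsum_cons in Hs.
  assert (0 <= f a) by (apply H; left; auto).
  assert (0 <= lsum s f) by (apply lsum_ge0; auto using in_cons).
  destruct Hx as [<-|Hx]; [lra|]. apply IH; auto using in_cons; lra.
Qed.

Lemma lsum_neq0 s f : lsum s f <> 0 -> exists x, In x s /\ f x <> 0.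
Proof.
  intros H; apply NNPP; intros Hn; apply H, lsum_eq0.
  intros x Hx; apply NNPP; eauto.
Qed.

(* Two duplicate-free lists containing the support of [f] give the same sum:
   both are permutations of the same list once the zero terms are dropped. *)
Lemma lsum_support s s' f : NoDup s -> NoDup s' ->
  (forall x, f x <> 0 -> In x s /\ In x s') -> lsum s f = lsum s' f.
Proof.
  set (nz := fun x => if Req_dec_T (f x) 0 then false else true).
  assert (Hfilter : forall l, lsum l f = lsum (filter nz l) f).
  { induction l as [|a l IH]; [reflexivity|]. cbn [filter]. unfold nz at 1.
    destruct (Req_dec_T (f a) 0) as [e|e]; rewrite ?lsum_cons, IH; [rewrite e; ring|reflexivity]. }
  intros H1 H2 H. rewrite (Hfilter s), (Hfilter s').
  induction (NoDup_Permutation (NoDup_filter nz H1) (NoDup_filter nz H2)) as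
    [| ? ? ? _ IH | | ? ? ? _ IH1 _ IH2]; rewrite ?lsum_cons; try lra.
  intros x; rewrite !filter_In; unfold nz; destruct (Req_dec_T (f x) 0) as [e|e].
  - split; intros [_ F]; discriminate F.
  - specialize (H x e); tauto.
Qed.

End ListSums.

Lemma lsum_map {X Y : Type} (h : X -> Y) s (f : Y -> R) :
  lsum (map h s) f = lsum s (fun x => f (h x)).
Proof. induction s as [|a s IH]; [reflexivity|]. cbn [map]. rewrite !lsum_cons, IH; reflexivity. Qed.

Lemma lsum_prod {X Y : Type} (s1 : list X) (s2 : list Y) f :
  lsum (list_prod s1 s2) f = lsum s1 (fun x => lsum s2 (fun y => f (x, y))).
Proof.
  induction s1 as [|a s IH]; [reflexivity|]. cbn [list_prod].
  rewrite lsum_app, lsum_map, lsum_cons, IH; reflexivity.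
Qed.

Lemma NoDup_list_prod {X Y : Type} (s1 : list X) (s2 : list Y) :
  NoDup s1 -> NoDup s2 -> NoDup (list_prod s1 s2).
Proof.
  intros H1 H2; induction H1 as [|a s Ha Hs IH]; [constructor|]. cbn [list_prod].
  apply NoDup_app; auto.
  - apply Injective_map_NoDup; auto. intros y y' E; inversion E; auto.
  - intros [x y] Hi Hj. apply in_map_iff in Hi. destruct Hi as [y0 [E _]]. inversion E; subst.
    apply in_prod_iff in Hj. tauto.
Qed.
Lemma ratio_test {I : Type} (l : list I) (x dl : I -> R) :
  (forall i, In i l -> 0 <= x i) -> (exists j, In j l /\ dl j < 0) ->
  exists t, 0 <= t /\ (forall i, In i l -> 0 <= x i + t * dl i) /\
    exists j, In j l /\ dl j < 0 /\ x j + t * dl j = 0.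
Proof.
  induction l as [|a l IH]; intros Hx [j [Hj Hd]]; [destruct Hj|].
  assert (Hxa : 0 <= x a) by (apply Hx; left; auto).
  assert (Hxl : forall i, In i l -> 0 <= x i) by auto using in_cons.
  set (r := x a / - dl a).
  assert (Hr : dl a < 0 -> 0 <= r /\ x a + r * dl a = 0).
  { intros Ha; split; [apply Rmult_le_pos; [|left; apply Rinv_0_lt_compat]; lra|].
    unfold r; field; lra. }
  destruct (classic (exists j, In j l /\ dl j < 0)) as [Hex|Hno].
  - destruct (IH Hxl Hex) as [t [Ht [Hnn [j' [Hj' [Hd' He']]]]]].
    destruct (Rlt_dec (dl a) 0) as [Ha|Ha].
    + destruct (Hr Ha) as [Hr0 Hra].
      destruct (Rle_dec r t) as [Hrt|Hrt].
      * exists r; split; [|split]; [auto| |exists a; split; [left|]; auto].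
        intros i [<-|Hi]; [lra|]. specialize (Hnn i Hi).
        destruct (Rlt_dec (dl i) 0); [nra| specialize (Hxl i Hi); nra].
      * exists t; split; [|split]; [auto| |exists j'; split; [right|]; auto].
        intros i [<-|Hi]; [nra| auto].
    + exists t; split; [|split]; [auto| |exists j'; split; [right|]; auto].
      intros i [<-|Hi]; [nra| auto].
  - assert (Ha : dl a < 0).
    { destruct Hj as [<-|Hj]; auto. exfalso; apply Hno; exists j; auto. }
    destruct (Hr Ha) as [Hr0 Hra].
    exists r; split; [|split]; [auto| |exists a; split; [left|]; auto].
    intros i [<-|Hi]; [lra|]. destruct (Rlt_dec (dl i) 0) as [Hl|Hl].
    + exfalso; apply Hno; exists i; auto.
    + specialize (Hxl i Hi); nra.
Qed.

Lemma min_over_finite_union {J X : Type} (L : list J) (S : J -> X -> Prop) (c : X -> R) :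
  (forall j, In j L -> (exists x, S j x) -> exists m, S j m /\ forall x, S j x -> c m <= c x) ->
  (exists j x, In j L /\ S j x) ->
  exists m, (exists j, In j L /\ S j m) /\ forall j x, In j L -> S j x -> c m <= c x.
Proof.
  induction L as [|a L IH]; intros Hmin [j [x [Hj Hx]]]; [destruct Hj|].
  destruct (classic (exists j x, In j L /\ S j x)) as [HL|HL].
  - destruct IH as [m [[j' [Hj' Hm]] Hmm]]; auto using in_cons.
    destruct (classic (exists x, S a x)) as [Ha|Ha].
    + destruct (Hmin a (in_eq a L) Ha) as [ma [Hma Hmina]].
      destruct (Rle_dec (c ma) (c m)) as [Hle|Hle].
      * exists ma; split; [exists a; split; [left|]; auto|].
        intros i y [<-|Hi] Hy; [apply Hmina| specialize (Hmm i y Hi Hy); lra]; auto.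
      * exists m; split; [exists j'; split; [right|]; auto|].
        intros i y [<-|Hi] Hy; [specialize (Hmina y Hy); lra| apply (Hmm i)]; auto.
    + exists m; split; [exists j'; split; [right|]; auto|].
      intros i y [<-|Hi] Hy; [exfalso; eauto| apply (Hmm i)]; auto.
  - destruct Hj as [->|Hj]; [|exfalso; eauto].
    destruct (Hmin j (in_eq j L) (ex_intro _ x Hx)) as [m [Hm Hmm]].
    exists m; split; [exists j; split; [left|]; auto|].
    intros i y [<-|Hi] Hy; [auto| exfalso; eauto].
Qed.

Section LinearMinimum.
Variables (I : Type) (ix : list I) (c : I -> R) (F : (I -> R) -> Prop).
Hypothesis F_ge0 : forall x, F x -> forall i, 0 <= x i.
Hypothesis F_supp : forall x, F x -> forall i, ~ In i ix -> x i = 0.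
Hypothesis F_mass : forall x, F x -> lsum ix x = 1.
Hypothesis F_line : forall x y t, F x -> F y -> (forall i, 0 <= x i + t * (y i - x i)) ->
  F (fun i => x i + t * (y i - x i)).

Definition cost (x : I -> R) : R := lsum ix (fun i => c i * x i).

Definition face (T : list I) (x : I -> R) : Prop := F x /\ forall i, ~ In i T -> x i = 0.

Definition drop (i : I) (T : list I) : list I :=
  remove (fun x y => excluded_middle_informative (x = y)) i T.

Lemma face_drop i T x : face (drop i T) x -> face T x.
Proof.
  intros [HF HT]; split; auto. intros j Hj; apply HT.
  intros Hr; apply in_remove in Hr; tauto.
Qed.

Lemma cost_line x y t : cost (fun i => x i + t * (y i - x i)) = cost x + t * (cost y - cost x).
Proof.
  unfold cost. rewrite <- lsum_minus, <- lsum_scal_l, <- lsum_plus.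
  apply lsum_ext; intros; ring.
Qed.

(* Moving along the line through [x] and [y] in the direction where the cost does not
   increase, one reaches the boundary of the face before leaving [F]: the differences
   [y i - x i] sum to zero, so some coordinate decreases. *)
Lemma face_descent T x y : face T x -> face T y -> (exists j, In j ix /\ y j <> x j) ->
  exists j z, In j T /\ face (drop j T) z /\ cost z <= cost x.
Proof.
  intros [Fx Tx] [Fy Ty] [j0 [Hj0 Hne]].
  set (s := if Rle_dec (cost y) (cost x) then 1 else -1).
  set (dl := fun i => s * (y i - x i)).
  assert (Hs : s * (cost y - cost x) <= 0).
  { unfold s; destruct Rle_dec; lra. }
  assert (Hsum : lsum ix dl = 0).
  { unfold dl; rewrite lsum_scal_l, lsum_minus, F_mass, F_mass; auto; ring. }
  assert (Hneg : exists j, In j ix /\ dl j < 0).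
  { apply NNPP; intros Hn.
    assert (Hz := lsum_ge0_eq0 ix dl
      (fun i Hi => Rnot_lt_le _ _ (fun H => Hn (ex_intro _ i (conj Hi H)))) Hsum j0 Hj0).
    unfold dl, s in Hz; destruct Rle_dec; lra. }
  destruct (ratio_test ix x dl (fun i _ => F_ge0 x Fx i) Hneg)
    as [t [Ht [Hnn [j [Hj [Hdj Hz]]]]]].
  assert (Hpos : forall i, 0 <= x i + s * t * (y i - x i)).
  { intros i; destruct (classic (In i ix)) as [Hi|Hi].
    - specialize (Hnn i Hi); unfold dl in Hnn; lra.
    - rewrite (F_supp x Fx i Hi), (F_supp y Fy i Hi); lra. }
  exists j, (fun i => x i + s * t * (y i - x i)); split; [|split; [split|]].
  - apply NNPP; intros HjT. unfold dl in Hdj. rewrite (Tx j HjT), (Ty j HjT) in Hdj; lra.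
  - apply F_line; auto.
  - intros i Hi. destruct (excluded_middle_informative (i = j)) as [->|Hij].
    + unfold dl in Hz; lra.
    + rewrite Tx, Ty; [ring| |]; intros HiT; apply Hi, in_in_remove; auto.
  - rewrite cost_line. nra.
Qed.

Lemma cost_eq x y : (forall j, In j ix -> y j = x j) -> cost y = cost x.
Proof. intros H; apply lsum_ext; intros j Hj; rewrite H; auto. Qed.

Lemma face_min_from_subfaces T :
  (forall i, In i T -> (exists x, face (drop i T) x) ->
     exists m, face (drop i T) m /\ forall x, face (drop i T) x -> cost m <= cost x) ->
  (exists x, face T x) -> exists m, face T m /\ forall x, face T x -> cost m <= cost x.
Proof.
  intros IH [x0 Hx0].
  destruct (classic (exists i x, In i T /\ face (drop i T) x)) as [Hsub|Hsub].
  - destruct (min_over_finite_union T (fun i => face (drop i T)) cost IH Hsub)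
      as [m [[i [Hi Hm]] Hmin]].
    exists m; split; [eapply face_drop; eauto|]. intros x Hx.
    destruct (classic (exists j, In j ix /\ m j <> x j)) as [Hne|Heq].
    + destruct (face_descent T x m Hx (face_drop i T m Hm) Hne) as [j [z [Hj [Hz Hzx]]]].
      specialize (Hmin j z Hj Hz); lra.
    + right; apply cost_eq; intros j Hj; apply NNPP; eauto.
  - exists x0; split; auto. intros x Hx.
    destruct (classic (exists j, In j ix /\ x j <> x0 j)) as [Hne|Heq].
    + destruct (face_descent T x0 x Hx0 Hx Hne) as [j [z [Hj [Hz _]]]].
      exfalso; eauto.
    + right; symmetry; apply cost_eq; intros j Hj; apply NNPP; eauto.
Qed.

Lemma face_min k T : (length T <= k)%nat -> (exists x, face T x) ->
  exists m, face T m /\ forall x, face T x -> cost m <= cost x.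
Proof.
  revert T; induction k as [|k IH]; intros T HT; apply face_min_from_subfaces.
  - intros i Hi; destruct T; [destruct Hi| simpl in HT; lia].
  - intros i Hi; apply IH.
    pose proof (remove_length_lt (fun x y => excluded_middle_informative (x = y)) T i Hi).
    unfold drop; lia.
Qed.

Lemma linear_min_attained : (exists x, F x) -> exists m, F m /\ forall x, F x -> cost m <= cost x.
Proof.
  intros [x0 Hx0].
  destruct (face_min (length ix) ix (le_n _)) as [m [Hm Hmin]]; [exists x0; split; auto|].
  exists m; split; [apply Hm|]. intros x Hx; apply Hmin; split; auto.
Qed.

End LinearMinimum.

Fixpoint fin_list {X : Type} (n : nat) : (Fin.t n -> X) -> list X :=
  match n with
  | O => fun _ => []
  | S m => fun f => f Fin.F1 :: fin_list m (fun i => f (Fin.FS i))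
  end.

Lemma in_fin_list {X : Type} n (f : Fin.t n -> X) i : In (f i) (fin_list n f).
Proof.
  induction i as [n|n i IH]; simpl; [left; auto| right; apply (IH (fun j => f (Fin.FS j)))].
Qed.

Lemma fin_sum_ext n (f g : Fin.t n -> R) : (forall i, f i = g i) -> fin_sum n f = fin_sum n g.
Proof.
  revert f g; induction n as [|n IH]; intros f g H; simpl; auto.
  rewrite H, (IH (fun i => f (Fin.FS i)) (fun i => g (Fin.FS i))); auto.
Qed.

Lemma fin_sum_ge0 n (f : Fin.t n -> R) : (forall i, 0 <= f i) -> 0 <= fin_sum n f.
Proof.
  revert f; induction n as [|n IH]; intros f H; simpl; [lra|].
  specialize (IH (fun i => f (Fin.FS i)) (fun i => H (Fin.FS i))). specialize (H Fin.F1). lra.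
Qed.

Lemma fin_sum_eq0 n (f : Fin.t n -> R) : (forall i, f i = 0) -> fin_sum n f = 0.
Proof.
  revert f; induction n as [|n IH]; intros f H; simpl; auto.
  rewrite H, (IH (fun i => f (Fin.FS i))); auto; ring.
Qed.

Lemma lsum_fin_sum {X : Type} (s : list X) n (g : Fin.t n -> X -> R) :
  lsum s (fun u => fin_sum n (fun i => g i u)) = fin_sum n (fun i => lsum s (g i)).
Proof.
  revert g; induction n as [|n IH]; intros g; simpl.
  - apply lsum_eq0; auto.
  - rewrite lsum_plus, (IH (fun i => g (Fin.FS i))); reflexivity.
Qed.

Section Distributions.
Context {A : Type}.
Implicit Types (pi : dist A) (s : list (proc A)).

Definition distr_on pi s : Prop :=
  NoDup s /\ (forall u, ~ In u s -> pi u = 0) /\ (forall u, 0 <= pi u) /\ lsum s pi = 1.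

Lemma dirac_ge0 (v u : proc A) : 0 <= dirac v u.
Proof. unfold dirac; destruct excluded_middle_informative; lra. Qed.

Lemma dirac_eq1 (p : proc A) : dirac p p = 1.
Proof. unfold dirac; destruct excluded_middle_informative as [_|n]; [reflexivity| exfalso; auto]. Qed.

Lemma lsum_dirac s v : NoDup s -> In v s -> lsum s (dirac v) = 1.
Proof.
  induction 1 as [|a s Ha Hs IH]; intros Hv; [destruct Hv|]. rewrite lsum_cons. unfold dirac at 1.
  destruct (excluded_middle_informative (a = v)) as [->|n].
  - rewrite lsum_eq0; [ring|]. intros x Hx; unfold dirac.
    destruct (excluded_middle_informative (x = v)); subst; tauto.
  - destruct Hv as [->|Hv]; [tauto|]. rewrite IH; auto; ring.
Qed.

Lemma distr_on_dirac t : distr_on (dirac t) [t].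
Proof.
  split; [repeat constructor; auto|split; [|split]].
  - intros u Hu; unfold dirac; destruct excluded_middle_informative; subst; auto.
    exfalso; apply Hu; left; auto.
  - intros; apply dirac_ge0.
  - apply lsum_dirac; [repeat constructor; auto| left; auto].
Qed.

Lemma distr_on_pref n (q : Fin.t (S n) -> R) (p : Fin.t (S n) -> proc A) : wf_weights q ->
  distr_on (pref_dist q p)
    (nodup (fun x y => excluded_middle_informative (x = y)) (fin_list (S n) p)).
Proof.
  intros [Hq Hs]; split; [apply NoDup_nodup|split; [|split]]; unfold pref_dist.
  - intros u Hu. apply fin_sum_eq0; intros i.
    unfold dirac; destruct excluded_middle_informative as [e|e]; [|ring].
    exfalso; apply Hu, nodup_In; subst; apply in_fin_list.
  - intros u; apply fin_sum_ge0; intros i.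
    specialize (Hq i); pose proof (dirac_ge0 (p i) u); nra.
  - rewrite (lsum_fin_sum _ (S n) (fun i u => q i * dirac (p i) u)), <- Hs.
    apply fin_sum_ext; intros i.
    rewrite lsum_scal_l, lsum_dirac; [ring|apply NoDup_nodup|apply nodup_In, in_fin_list].
Qed.

Definition par_list (B : A -> Prop) s1 s2 : list (proc A) :=
  map (fun pr => Par B (fst pr) (snd pr)) (list_prod s1 s2).

Lemma par_dist_Par B (mu1 mu2 : dist A) x y : par_dist B mu1 mu2 (Par B x y) = mu1 x * mu2 y.
Proof. simpl. destruct excluded_middle_informative as [_|n]; auto. exfalso; auto. Qed.

Lemma in_par_list B s1 s2 x y : In x s1 -> In y s2 -> In (Par B x y) (par_list B s1 s2).
Proof. intros; apply in_map_iff; exists (x, y); split; auto; apply in_prod; auto. Qed.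

Lemma in_par_list_inv B s1 s2 u :
  In u (par_list B s1 s2) -> exists a b, u = Par B a b /\ In a s1 /\ In b s2.
Proof.
  unfold par_list; intros H; apply in_map_iff in H. destruct H as [[a b] [<- H]].
  apply in_prod_iff in H. exists a, b; simpl; tauto.
Qed.

Lemma distr_on_par B mu1 mu2 s1 s2 : distr_on mu1 s1 -> distr_on mu2 s2 ->
  distr_on (par_dist B mu1 mu2) (par_list B s1 s2).
Proof.
  intros [N1 [Z1 [P1 S1]]] [N2 [Z2 [P2 S2]]].
  split; [|split; [|split]].
  - apply Injective_map_NoDup; [|apply NoDup_list_prod; auto].
    intros [a b] [c d] E; simpl in E; inversion E; auto.
  - intros u Hu; destruct u as [| | |B' u1 u2]; simpl; auto.
    destruct excluded_middle_informative as [e|e]; auto. subst B'.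
    destruct (classic (In u1 s1)) as [Hu1|Hu1]; [|rewrite Z1; auto; ring].
    destruct (classic (In u2 s2)) as [Hu2|Hu2]; [|rewrite Z2; auto; ring].
    exfalso; apply Hu, in_par_list; auto.
  - intros u; destruct u as [| | |B' u1 u2]; simpl; try lra.
    destruct excluded_middle_informative; [apply Rmult_le_pos; auto|lra].
  - unfold par_list; rewrite lsum_map, lsum_prod, <- S1. apply lsum_ext; intros x _.
    rewrite <- (Rmult_1_r (mu1 x)), <- S2, <- lsum_scal_l. apply lsum_ext; intros y _.
    apply par_dist_Par.
Qed.

Lemma step_distr_on t a pi : step t a pi -> exists s, distr_on pi s.
Proof.
  induction 1 as [| | |? ? ? ? ? ? _ _ [s1 H1] _ [s2 H2]|? ? ? ? ? _ _ [s1 H1]|? ? ? ? ? _ _ [s2 H2]];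
    eauto using distr_on_pref, distr_on_par, distr_on_dirac.
Qed.

End Distributions.

Section Couplings.
Context {A : Type}.
Implicit Types (h : proc A -> proc A -> R) (pi : dist A) (s : list (proc A)).

Lemma coupling_support pi pi' s1 s2 S1 S2 omega : distr_on pi S1 -> distr_on pi' S2 ->
  coupling pi pi' s1 s2 omega -> forall t t', omega t t' <> 0 ->
  In t s1 /\ In t' s2 /\ In t S1 /\ In t' S2.
Proof.
  intros F1 F2 [N1 [N2 [Pos [Z [R1 [Z1 [C1 Z2]]]]]]] t t' Hn.
  assert (Hin : In t s1 /\ In t' s2) by (apply NNPP; auto).
  destruct Hin as [Ht Ht']. repeat split; auto; apply NNPP; intros H; apply Hn.
  - apply (lsum_ge0_eq0 s2 (omega t)); auto. rewrite R1; auto. apply F1; auto.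
  - apply (lsum_ge0_eq0 s1 (fun t => omega t t')); auto. rewrite C1; auto. apply F2; auto.
Qed.

Lemma coupling_restrict pi pi' s1 s2 S1 S2 omega : distr_on pi S1 -> distr_on pi' S2 ->
  coupling pi pi' s1 s2 omega ->
  coupling pi pi' S1 S2 omega /\ forall h, coupling_cost h s1 s2 omega = coupling_cost h S1 S2 omega.
Proof.
  intros F1 F2 Hc. pose proof (coupling_support _ _ _ _ _ _ _ F1 F2 Hc) as Hs.
  assert (Hz : forall t t', ~ (In t S1 /\ In t' S2) -> omega t t' = 0).
  { intros t t' H; apply NNPP; intros Hn; apply Hs in Hn; tauto. }
  destruct Hc as [N1 [N2 [Pos [Z [R1 [Z1 [C1 Z2]]]]]]].
  destruct F1 as [M1 [Y1 _]], F2 as [M2 [Y2 _]].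
  split; [repeat split; auto|].
  - intros t Ht. destruct (classic (In t s1)) as [H|H].
    + rewrite <- R1; auto. symmetry; apply lsum_support; auto. intros x Hx; apply Hs in Hx; tauto.
    + rewrite Z1; auto. apply lsum_eq0; intros x _. apply Z; tauto.
  - intros t Ht. destruct (classic (In t s2)) as [H|H].
    + rewrite <- C1; auto. symmetry; apply lsum_support; auto. intros x Hx; apply Hs in Hx; tauto.
    + rewrite Z2; auto. apply lsum_eq0; intros x _. apply Z; tauto.
  - intros h. unfold coupling_cost.
    assert (Hprod : forall t t', h t t' * omega t t' <> 0 -> omega t t' <> 0).
    { intros t t' H E; apply H; rewrite E; ring. }
    rewrite (lsum_ext s1 _ (fun t => lsum S2 (fun t' => h t t' * omega t t'))).
    + apply lsum_support; auto. intros t Ht. apply lsum_neq0 in Ht.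
      destruct Ht as [t' [_ Ht']]. apply Hprod, Hs in Ht'; tauto.
    + intros t _. apply lsum_support; auto. intros t' Ht'. apply Hprod, Hs in Ht'; tauto.
Qed.

Lemma coupling_mass pi pi' s1 s2 S1 S2 omega : distr_on pi S1 -> distr_on pi' S2 ->
  coupling pi pi' s1 s2 omega -> lsum s1 (fun t => lsum s2 (omega t)) = 1.
Proof.
  intros F1 F2 Hc. destruct (coupling_restrict _ _ _ _ _ _ _ F1 F2 Hc) as [Hc' Hcost].
  specialize (Hcost (fun _ _ => 1)). unfold coupling_cost in Hcost.
  rewrite (lsum_ext s1 _ (fun t => lsum s2 (fun t' => 1 * omega t t'))),  Hcost.
  - destruct Hc' as [_ [_ [_ [_ [R1 _]]]]].
    rewrite (lsum_ext S1 _ pi); [apply F1|]. intros t Ht. rewrite <- R1; auto.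
    apply lsum_ext; intros; ring.
  - intros; apply lsum_ext; intros; ring.
Qed.

Lemma coupling_cost_ge0 h s1 s2 omega pi pi' : (forall t t', 0 <= h t t') ->
  coupling pi pi' s1 s2 omega -> 0 <= coupling_cost h s1 s2 omega.
Proof.
  intros Hh Hc. apply lsum_ge0; intros; apply lsum_ge0; intros.
  apply Rmult_le_pos; auto. apply Hc.
Qed.

Lemma coupling_prod pi pi' S1 S2 : distr_on pi S1 -> distr_on pi' S2 ->
  coupling pi pi' S1 S2 (fun t t' => pi t * pi' t').
Proof.
  intros [M1 [Y1 [Q1 T1]]] [M2 [Y2 [Q2 T2]]].
  repeat split; auto.
  - intros; apply Rmult_le_pos; auto.
  - intros t t' H. destruct (classic (In t S1)); [|rewrite Y1; auto; ring].
    destruct (classic (In t' S2)); [|rewrite Y2; auto; ring]. tauto.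
  - intros t _; rewrite lsum_scal_l, T2; ring.
  - intros t' _; rewrite lsum_scal_r, T1; ring.
Qed.

(* Couplings on fixed support lists form a polytope, so the optimal transport cost is attained. *)
Lemma Kant_exists h pi pi' S1 S2 : distr_on pi S1 -> distr_on pi' S2 ->
  exists k, Kant h pi pi' k.
Proof.
  intros F1 F2.
  pose (F := fun x : proc A * proc A -> R => coupling pi pi' S1 S2 (fun t t' => x (t, t'))).
  destruct (linear_min_attained (proc A * proc A) (list_prod S1 S2) (fun p => h (fst p) (snd p)) F)
    as [m [Hm Hmin]].
  - intros x Hx [t t']; apply Hx.
  - intros x Hx [t t'] Hi. apply Hx. rewrite <- in_prod_iff; auto.
  - intros x Hx. rewrite lsum_prod, (lsum_ext S1 _ pi); [apply F1|].
    intros t Ht. apply Hx; auto.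
  - intros x y t Hx Hy Hnn.
    destruct Hx as [N1 [N2 [_ [Zx [Rx [Z1 [Cx Z2]]]]]]], Hy as [_ [_ [_ [Zy [Ry [_ [Cy _]]]]]]].
    split; [exact N1|]; split; [exact N2|]; split; [|split; [|split; [|split; [|split]]]].
    + intros a b; apply (Hnn (a, b)).
    + intros a b H. rewrite Zx, Zy; auto; ring.
    + intros a Ha. rewrite lsum_plus, lsum_scal_l, lsum_minus, Rx, Ry; auto; ring.
    + exact Z1.
    + intros b Hb. rewrite lsum_plus, lsum_scal_l, lsum_minus, Cx, Cy; auto; ring.
    + exact Z2.
  - exists (fun p => pi (fst p) * pi' (snd p)). apply coupling_prod; auto.
  - exists (coupling_cost h S1 S2 (fun t t' => m (t, t'))). split.
    + exists S1, S2, (fun t t' => m (t, t')); split; auto.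
    + intros s1 s2 omega Hc. destruct (coupling_restrict _ _ _ _ _ _ _ F1 F2 Hc) as [Hc' ->].
      specialize (Hmin (fun p => omega (fst p) (snd p)) Hc').
      unfold cost in Hmin. rewrite !lsum_prod in Hmin. exact Hmin.
Qed.

Lemma Kant_bounded h pi pi' S1 S2 k : bounded01 h ->
  distr_on pi S1 -> distr_on pi' S2 -> Kant h pi pi' k -> 0 <= k <= 1.
Proof.
  intros Hh F1 F2 [[s1 [s2 [om [Hc <-]]]] Hmin]. split.
  - eapply coupling_cost_ge0; eauto. intros; apply Hh.
  - eapply Rle_trans; [apply Hmin, (coupling_prod _ _ S1 S2); auto|].
    destruct F1 as [_ [_ [P1 T1]]], F2 as [_ [_ [P2 T2]]].
    apply Rle_trans with (lsum S1 (fun t => lsum S2 (fun t' => pi t * pi' t'))).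
    + apply lsum_le; intros t _; apply lsum_le; intros t' _.
      specialize (Hh t t'). pose proof (Rmult_le_pos _ _ (P1 t) (P2 t')). nra.
    + right. rewrite (lsum_ext S1 _ pi), T1; auto. intros t _.
      rewrite lsum_scal_l, T2; ring.
Qed.

Lemma Kant_mono h1 h2 pi pi' k1 k2 :
  (forall t t', h1 t t' <= h2 t t') -> Kant h1 pi pi' k1 -> Kant h2 pi pi' k2 -> k1 <= k2.
Proof.
  intros Hle [_ Hmin1] [[s1 [s2 [om [Hc <-]]]] _].
  eapply Rle_trans; [apply Hmin1; eauto|]. apply lsum_le; intros; apply lsum_le; intros.
  apply Rmult_le_compat_r; [apply Hc|auto].
Qed.

End Couplings.

Lemma sup_exists (S : R -> Prop) : (forall c, S c -> c <= 1) -> exists v, is_sup S v.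
Proof.
  intros H. destruct (classic (exists c, S c)) as [He|Hn].
  - destruct (completeness S) as [m Hm]; [exists 1; intros c Hc; auto| auto|].
    exists m; right; auto.
  - exists 0; left; auto.
Qed.

Lemma inf_exists (S : R -> Prop) : (forall c, S c -> 0 <= c) -> exists v, is_inf S v.
Proof.
  intros H. destruct (classic (exists c, S c)) as [[c Hc]|Hn]; [|exists 1; left; auto].
  destruct (completeness (fun x => S (- x))) as [m [Hm1 Hm2]].
  - exists 0; intros x Hx; specialize (H _ Hx); lra.
  - exists (- c); rewrite Ropp_involutive; auto.
  - exists (- m); right; split; [exists c; auto|split].
    + intros c' Hc'. assert (- c' <= m) by (apply Hm1; rewrite Ropp_involutive; auto). lra.
    + intros b Hb. assert (m <= - b) by (apply Hm2; intros x Hx; specialize (Hb _ Hx); lra). lra.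
Qed.

Lemma sup_ub S v c : is_sup S v -> S c -> c <= v.
Proof. intros [[Hn _]|[_ [Hu _]]] Hc; [exfalso; eauto| apply Hu; auto]. Qed.

Lemma sup_le S v b : is_sup S v -> (forall c, S c -> c <= b) -> 0 <= b -> v <= b.
Proof. intros [[_ ->]|[_ [_ Hl]]] Hb H0; [auto| apply Hl; intros c Hc; auto]. Qed.

Lemma sup_ge0 S v : is_sup S v -> (forall c, S c -> 0 <= c) -> 0 <= v.
Proof.
  intros [[_ ->]|[[c Hc] [Hu _]]] H; [lra|]. specialize (H c Hc); specialize (Hu c Hc); lra.
Qed.

Lemma sup_bounded S v : is_sup S v -> (forall c, S c -> 0 <= c <= 1) -> 0 <= v <= 1.
Proof.
  intros Hv H; split; [apply (sup_ge0 _ _ Hv)|apply (sup_le _ _ 1 Hv)]; try lra;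
    intros c Hc; apply (H c Hc).
Qed.

Lemma sup_unique S v w : is_sup S v -> is_sup S w -> v = w.
Proof.
  intros [[Hn ->]|[He Hl]] [[Hn' ->]|[He' Hl']]; auto; try (exfalso; tauto).
  apply Rle_antisym; [apply Hl; apply Hl'| apply Hl'; apply Hl].
Qed.

Lemma inf_lb S v c : is_inf S v -> S c -> v <= c.
Proof. intros [[Hn _]|[_ [Hl _]]] Hc; [exfalso; eauto| apply Hl; auto]. Qed.

Lemma inf_ge S v b : is_inf S v -> (forall c, S c -> b <= c) -> b <= 1 -> b <= v.
Proof. intros [[_ ->]|[_ [_ Hg]]] Hb H1; auto. Qed.

Lemma inf_le1 S v : is_inf S v -> (forall c, S c -> c <= 1) -> v <= 1.
Proof.
  intros [[_ ->]|[[c Hc] [Hl _]]] H; [lra|]. specialize (H c Hc); specialize (Hl c Hc); lra.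
Qed.

Lemma inf_approx S v eps : is_inf S v -> v < 1 -> 0 < eps -> exists c, S c /\ c < v + eps.
Proof.
  intros [[_ ->]|[_ [Hl Hg]]] Hv He; [lra|]. apply NNPP; intros H.
  assert (v + eps <= v); [|lra].
  apply Hg; intros c Hc. apply Rnot_lt_le; intros Hlt; eauto.
Qed.

Lemma sup_mono S1 S2 v1 v2 : is_sup S1 v1 -> is_sup S2 v2 ->
  (forall c1, S1 c1 -> exists c2, S2 c2 /\ c1 <= c2) -> (forall c, S2 c -> 0 <= c) -> v1 <= v2.
Proof.
  intros H1 H2 Hm Hp. apply (sup_le S1); auto; [|eapply sup_ge0; eauto].
  intros c Hc; destruct (Hm c Hc) as [c2 [Hc2 Hle]]. pose proof (sup_ub _ _ _ H2 Hc2); lra.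
Qed.

Lemma inf_mono S1 S2 v1 v2 : is_inf S1 v1 -> is_inf S2 v2 ->
  (forall c2, S2 c2 -> exists c1, S1 c1 /\ c1 <= c2) -> (forall c, S1 c -> c <= 1) -> v1 <= v2.
Proof.
  intros H1 H2 Hm Hb. apply (inf_ge S2); auto; [|eapply inf_le1; eauto].
  intros c Hc; destruct (Hm c Hc) as [c1 [Hc1 Hle]]. pose proof (inf_lb _ _ _ H1 Hc1); lra.
Qed.

Section Bisimilarity.
Context {A : Type}.
Implicit Types (h f g : proc A -> proc A -> R) (P : dist A -> Prop).

Definition finitely_supported P : Prop := forall pi, P pi -> exists s, distr_on pi s.

Definition kant_values h (pi : dist A) P2 : R -> Prop :=
  fun k => exists pi2, P2 pi2 /\ Kant h pi pi2 k.
Definition haus_values h P1 P2 : R -> Prop :=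
  fun c => exists pi1, P1 pi1 /\ is_inf (kant_values h pi1 P2) c.

Lemma Haus_iff h P1 P2 v : Haus h P1 P2 v <->
  exists v1 v2, is_sup (haus_values h P1 P2) v1 /\ is_sup (haus_values h P2 P1) v2 /\ v = Rmax v1 v2.
Proof. reflexivity. Qed.

Lemma Haus_le h P1 P2 v b : Haus h P1 P2 v -> 0 <= b ->
  (forall c, haus_values h P1 P2 c -> c <= b) -> (forall c, haus_values h P2 P1 c -> c <= b) ->
  v <= b.
Proof.
  intros Hv Hb H1 H2. apply Haus_iff in Hv. destruct Hv as [v1 [v2 [Hv1 [Hv2 ->]]]].
  apply Rmax_lub; [apply (sup_le _ _ _ Hv1)|apply (sup_le _ _ _ Hv2)]; auto.
Qed.

Lemma kant_values_bounded h pi P2 : bounded01 h -> finitely_supported P2 ->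
  (exists s, distr_on pi s) -> forall k, kant_values h pi P2 k -> 0 <= k <= 1.
Proof.
  intros Hh HP [s Hs] k [pi2 [Hp Hk]]. destruct (HP _ Hp) as [s2 Hs2].
  eapply (Kant_bounded h pi pi2 s s2 k); auto.
Qed.

Lemma haus_values_bounded h P1 P2 : bounded01 h -> finitely_supported P1 -> finitely_supported P2 ->
  forall c, haus_values h P1 P2 c -> 0 <= c <= 1.
Proof.
  intros Hh H1 H2 c [pi1 [Hp Hc]]. pose proof (kant_values_bounded h pi1 P2 Hh H2 (H1 _ Hp)) as Hb.
  split; [apply (inf_ge _ _ 0 Hc); [intros; apply Hb; auto| lra]|].
  apply (inf_le1 _ _ Hc); intros; apply Hb; auto.
Qed.

Lemma Haus_exists h P1 P2 : bounded01 h -> finitely_supported P1 -> finitely_supported P2 ->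
  exists v, Haus h P1 P2 v.
Proof.
  intros Hh H1 H2.
  destruct (sup_exists (haus_values h P1 P2)) as [v1 Hv1];
    [intros c Hc; apply (haus_values_bounded h P1 P2 Hh H1 H2 c Hc)|].
  destruct (sup_exists (haus_values h P2 P1)) as [v2 Hv2];
    [intros c Hc; apply (haus_values_bounded h P2 P1 Hh H2 H1 c Hc)|].
  exists (Rmax v1 v2); apply Haus_iff; eauto.
Qed.

Lemma Haus_bounded h P1 P2 v : bounded01 h -> finitely_supported P1 -> finitely_supported P2 ->
  Haus h P1 P2 v -> 0 <= v <= 1.
Proof.
  intros Hh H1 H2 H. apply Haus_iff in H. destruct H as [v1 [v2 [Hv1 [Hv2 ->]]]].
  pose proof (sup_bounded _ _ Hv1 (haus_values_bounded h P1 P2 Hh H1 H2)).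
  pose proof (sup_bounded _ _ Hv2 (haus_values_bounded h P2 P1 Hh H2 H1)).
  unfold Rmax; destruct Rle_dec; lra.
Qed.

Lemma Haus_sym h P1 P2 v : Haus h P1 P2 v -> Haus h P2 P1 v.
Proof.
  intros H. apply Haus_iff in H. destruct H as [v1 [v2 [Hv1 [Hv2 ->]]]].
  apply Haus_iff. exists v2, v1; split; auto; split; auto. apply Rmax_comm.
Qed.

Lemma haus_values_sup_mono h1 h2 P1 P2 v1 v2 : bounded01 h1 -> bounded01 h2 ->
  finitely_supported P1 -> finitely_supported P2 -> (forall t t', h1 t t' <= h2 t t') ->
  is_sup (haus_values h1 P1 P2) v1 -> is_sup (haus_values h2 P1 P2) v2 -> v1 <= v2.
Proof.
  intros B1 B2 H1 H2 Hle Hv1 Hv2.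
  apply (sup_mono _ _ _ _ Hv1 Hv2); [|intros c Hc; apply (haus_values_bounded h2 P1 P2 B2 H1 H2 c Hc)].
  intros c1 [pi1 [Hp Hc1]]. destruct (H1 _ Hp) as [s Hs].
  pose proof (kant_values_bounded h1 pi1 P2 B1 H2 (ex_intro _ s Hs)) as I1.
  pose proof (kant_values_bounded h2 pi1 P2 B2 H2 (ex_intro _ s Hs)) as I2.
  destruct (inf_exists (kant_values h2 pi1 P2)) as [c2 Hc2]; [intros c Hc; apply (I2 c Hc)|].
  exists c2; split; [exists pi1; auto|].
  apply (inf_mono _ _ _ _ Hc1 Hc2); [|intros c Hc; apply (I1 c Hc)].
  intros k2 [pi2 [Hp2 Hk2]]. destruct (H2 _ Hp2) as [s2 Hs2].
  destruct (Kant_exists h1 pi1 pi2 s s2 Hs Hs2) as [k1 Hk1].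
  exists k1; split; [exists pi2; auto| eapply Kant_mono; eauto].
Qed.

Lemma Haus_mono h1 h2 P1 P2 v1 v2 : bounded01 h1 -> bounded01 h2 ->
  finitely_supported P1 -> finitely_supported P2 ->
  (forall t t', h1 t t' <= h2 t t') -> Haus h1 P1 P2 v1 -> Haus h2 P1 P2 v2 -> v1 <= v2.
Proof.
  intros B1 B2 H1 H2 Hle Hv1 Hv2. apply Haus_iff in Hv1, Hv2.
  destruct Hv1 as [a1 [b1 [Ha1 [Hb1 ->]]]], Hv2 as [a2 [b2 [Ha2 [Hb2 ->]]]].
  pose proof (haus_values_sup_mono h1 h2 P1 P2 a1 a2 B1 B2 H1 H2 Hle Ha1 Ha2).
  pose proof (haus_values_sup_mono h1 h2 P2 P1 b1 b2 B1 B2 H2 H1 Hle Hb1 Hb2).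
  unfold Rmax; repeat destruct Rle_dec; lra.
Qed.

Lemma der_finitely_supported t a : finitely_supported (der t a).
Proof. intros pi H; eapply step_distr_on; eauto. Qed.

Lemma Haus_der_bounded h t t' a c : bounded01 h -> Haus h (der t a) (der t' a) c -> 0 <= c <= 1.
Proof. intros Hh; apply Haus_bounded; auto using der_finitely_supported. Qed.

Lemma Bfun_exists h t t' : bounded01 h -> exists v, Bfun h t t' v.
Proof. intros Hh. apply sup_exists. intros c [a Ha]. apply (Haus_der_bounded h t t' a c Hh Ha). Qed.

Lemma Bfun_bounded h t t' v : bounded01 h -> Bfun h t t' v -> 0 <= v <= 1.
Proof. intros Hh H. apply (sup_bounded _ _ H). intros c [a Ha]; apply (Haus_der_bounded h t t' a c Hh Ha). Qed.

Lemma Bfun_le h t t' v b : Bfun h t t' v -> 0 <= b ->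
  (forall a c, haus_values h (der t a) (der t' a) c -> c <= b) ->
  (forall a c, haus_values h (der t' a) (der t a) c -> c <= b) -> v <= b.
Proof.
  intros Hv Hb H1 H2. refine (sup_le _ _ _ Hv _ Hb).
  intros c [a Ha]; apply (Haus_le _ _ _ _ _ Ha Hb); [apply H1|apply H2].
Qed.

Lemma Bfun_mono h1 h2 t t' v1 v2 : bounded01 h1 -> bounded01 h2 ->
  (forall t t', h1 t t' <= h2 t t') -> Bfun h1 t t' v1 -> Bfun h2 t t' v2 -> v1 <= v2.
Proof.
  intros B1 B2 Hle H1 H2.
  apply (sup_mono _ _ _ _ H1 H2); [|intros c [a Ha]; apply (Haus_der_bounded h2 t t' a c B2 Ha)].
  intros c1 [a Ha]. destruct (Haus_exists h2 (der t a) (der t' a)) as [c2 Hc2];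
    auto using der_finitely_supported.
  exists c2; split; [exists a; auto|].
  exact (Haus_mono h1 h2 _ _ c1 c2 B1 B2 (der_finitely_supported t a) (der_finitely_supported t' a) Hle Ha Hc2).
Qed.

Lemma Bfun_sym h t t' v : Bfun h t t' v -> Bfun h t' t v.
Proof.
  unfold Bfun. intros [[Hn Hv]|[He [Hu Hl]]].
  - left; split; auto. intros [c [a Ha]]; apply Hn; exists c, a; apply Haus_sym; auto.
  - right; split; [destruct He as [c [a Ha]]; exists c, a; apply Haus_sym; auto|split].
    + intros c [a Ha]; apply Hu; exists a; apply Haus_sym; auto.
    + intros b Hb; apply Hl; intros c [a Ha]; apply Hb; exists a; apply Haus_sym; auto.
Qed.

Definition prefix_point h : Prop := bounded01 h /\ forall t t' v, Bfun h t t' v -> v <= h t t'.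

Lemma prefix_point_Bfun h g : prefix_point h -> (forall t t', Bfun h t t' (g t t')) ->
  prefix_point g /\ forall t t', g t t' <= h t t'.
Proof.
  intros [Hh Hpre] Hg.
  assert (Bg : bounded01 g) by (intros t t'; eapply Bfun_bounded; eauto).
  assert (Hgh : forall t t', g t t' <= h t t') by auto.
  split; [split; [exact Bg|]|exact Hgh]. intros t t' v Hv. apply (Bfun_mono g h t t' v (g t t')); auto.
Qed.

(* Tarski's construction: the pointwise infimum of all prefix points is again one. *)
Lemma glb_prefix_point f : bounded01 f ->
  (forall t t', is_glb (fun r => exists h, prefix_point h /\ r = h t t') (f t t')) -> prefix_point f.
Proof.
  intros Bf Hf. split; auto. intros t t' w Hw. apply (Hf t t'). intros r [h [Hh ->]].
  destruct (Bfun_exists h t t' (proj1 Hh)) as [u Hu].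
  apply Rle_trans with u; [|apply Hh; auto].
  eapply Bfun_mono; [exact Bf|exact (proj1 Hh)| |exact Hw|exact Hu].
  intros a b; apply (Hf a b); eauto.
Qed.

Lemma bisim_metric_le_prefix_point (d g : proc A -> proc A -> R) : is_bisim_metric d -> prefix_point g ->
  forall t t', d t t' <= g t t'.
Proof.
  intros [_ [_ Hleast]] Hg.
  set (Pre := fun t t' r => exists h, prefix_point h /\ r = h t t').
  assert (Hglb : forall t t', exists v, is_glb (Pre t t') v).
  { intros t t'. destruct (inf_exists (Pre t t')) as [v [[Hn _]|[_ Hv]]]; eauto.
    - intros c [h [[Hb _] ->]]; apply Hb.
    - exfalso; apply Hn; exists (g t t'), g; auto. }
  set (f := fun t t' => proj1_sig (ClassicalEpsilon.constructive_indefinite_description _ (Hglb t t'))).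
  assert (Hf : forall t t', is_glb (Pre t t') (f t t')) by (intros; unfold f; apply proj2_sig).
  assert (Hfle : forall h, prefix_point h -> forall t t', f t t' <= h t t').
  { intros h Hh t t'; apply (Hf t t'); exists h; auto. }
  assert (Bf : bounded01 f).
  { intros t t'; split; [apply (Hf t t'); intros r [h [[Hb _] ->]]; apply Hb|].
    eapply Rle_trans; [apply Hfle; eauto| apply Hg]. }
  assert (Pf : prefix_point f) by (apply glb_prefix_point; auto).
  assert (HB : forall t t', exists v, Bfun f t t' v) by (intros; apply Bfun_exists; auto).
  set (f' := fun t t' => proj1_sig (ClassicalEpsilon.constructive_indefinite_description _ (HB t t'))).
  assert (Hf' : forall t t', Bfun f t t' (f' t t')) by (intros; unfold f'; apply proj2_sig).
  destruct (prefix_point_Bfun f f' Pf Hf') as [Pf' Hf'f].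
  assert (Hfix : is_B_fixpoint f).
  { intros t t'. replace (f t t') with (f' t t'); [apply Hf'|].
    apply Rle_antisym; [apply Hf'f| apply Hfle; auto]. }
  intros t t'. eapply Rle_trans; [apply Hleast; eauto| apply Hfle; auto].
Qed.

Lemma bisim_metric_sym (d : proc A -> proc A -> R) t t' : is_bisim_metric d -> d t t' = d t' t.
Proof.
  intros [_ [Hfix _]].
  exact (sup_unique _ _ _ (Hfix t t') (Bfun_sym d _ _ _ (Hfix t' t))).
Qed.

End Bisimilarity.

Section Transitions.
Context {A : Type}.

Definition sync_all : A -> Prop := fun _ => True.

Lemma step_Nil (a : A) pi : ~ step Nil a pi.
Proof. intros H; inversion H. Qed.

Lemma pref_dist_one (p : proc A) : pref_dist (fun _ : Fin.t 1 => 1) (fun _ => p) = dirac p.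
Proof. extensionality u. unfold pref_dist; simpl; ring. Qed.

Lemma step_pref_one_inv (a b : A) (p : proc A) pi :
  step (Pref a wf_weights_one (fun _ => p)) b pi -> b = a /\ pi = dirac p.
Proof.
  intros H; inversion H; subst.
  apply inj_pair2_eq_dec in H3; [|apply Nat.eq_dec]. subst.
  apply inj_pair2_eq_dec in H4; [|apply Nat.eq_dec]. subst.
  split; auto; apply pref_dist_one.
Qed.

Lemma step_pref_one (a : A) (p : proc A) : step (Pref a wf_weights_one (fun _ => p)) a (dirac p).
Proof. rewrite <- pref_dist_one; constructor. Qed.

Lemma step_par_all_inv (a : A) x1 x2 pi : step (Par sync_all x1 x2) a pi ->
  exists mu1 mu2, pi = par_dist sync_all mu1 mu2 /\ step x1 a mu1 /\ step x2 a mu2.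
Proof.
  intros H; inversion H; subst; eauto;
    match goal with Hn : ~ sync_all a |- _ => exfalso; apply Hn; exact I end.
Qed.

End Transitions.

Section BisimilarityMetric.
Context {A : Type}.
Variable d : proc A -> proc A -> R.
Hypothesis Hd : is_bisim_metric d.

Lemma d_bounded : bounded01 d. Proof. apply Hd. Qed.

Lemma d_fixpoint t t' : Bfun d t t' (d t t'). Proof. apply Hd. Qed.

Lemma d_Nil : d Nil Nil = 0.
Proof.
  apply Rle_antisym; [|apply d_bounded].
  apply (Bfun_le d _ _ _ _ (d_fixpoint Nil Nil)); [lra| |];
    intros a c [pi [Hs _]]; exfalso; eapply step_Nil; eauto.
Qed.

Lemma Kant_dirac_le h (x y : proc A) k : Kant h (dirac x) (dirac y) k -> k <= h x y.
Proof.
  intros [_ Hmin].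
  eapply Rle_trans; [apply Hmin, coupling_prod; apply distr_on_dirac|].
  unfold coupling_cost. rewrite !lsum_cons, !lsum_nil, !dirac_eq1. right; ring.
Qed.

Lemma haus_values_pref_one (a b : A) x y c :
  haus_values d (der (Pref a wf_weights_one (fun _ => x)) b)
               (der (Pref a wf_weights_one (fun _ => y)) b) c -> c <= d x y.
Proof.
  intros [pi1 [Hs Hinf]]. apply step_pref_one_inv in Hs. destruct Hs as [-> ->].
  destruct (Kant_exists d (dirac x) (dirac y) [x] [y]) as [k Hk]; try apply distr_on_dirac.
  apply Rle_trans with k; [|apply Kant_dirac_le; auto].
  apply (inf_lb _ _ k Hinf). exists (dirac y); split; auto. apply step_pref_one.
Qed.

Lemma d_Pref_one (a : A) p q :
  d (Pref a wf_weights_one (fun _ => p)) (Pref a wf_weights_one (fun _ => q)) <= d p q.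
Proof.
  apply (Bfun_le d _ _ _ _ (d_fixpoint _ _)); [apply d_bounded| |];
    intros b c Hc; [|rewrite (bisim_metric_sym d _ _ Hd)]; eapply haus_values_pref_one; eauto.
Qed.

(* The transfer property of the metric, up to an arbitrary slack [eps]: the infimum defining
   [d x y] need not be attained. *)
Lemma d_transfer x y (a : A) mu eps : d x y < 1 -> step x a mu -> 0 < eps ->
  exists mu' k, step y a mu' /\ Kant d mu mu' k /\ k < d x y + eps.
Proof.
  intros Hxy Hs He.
  destruct (Haus_exists d (der x a) (der y a)) as [c Hc];
    auto using d_bounded, der_finitely_supported.
  pose proof (sup_ub _ _ c (d_fixpoint x y) (ex_intro _ a Hc)) as Hcd.
  apply Haus_iff in Hc. destruct Hc as [v1 [v2 [Hv1 [Hv2 ->]]]].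
  destruct (step_distr_on _ _ _ Hs) as [s Hfs].
  destruct (inf_exists (kant_values d mu (der y a))) as [i Hi].
  { intros k Hk. apply (kant_values_bounded d mu (der y a)); eauto using d_bounded, der_finitely_supported. }
  assert (Hiv : i <= v1) by (apply (sup_ub _ _ _ Hv1); exists mu; auto).
  pose proof (Rmax_l v1 v2).
  destruct (inf_approx _ _ eps Hi) as [k [[mu' [Hmu' Hk]] Hlt]]; [lra|auto|].
  exists mu', k; split; [exact Hmu'| split; [exact Hk| lra]].
Qed.

End BisimilarityMetric.

Section FourfoldSums.
Context {X : Type}.
Variables (S1 S2 S1' S2' : list X).

Definition lsum4 (f : X -> X -> X -> X -> R) : R :=
  lsum S1 (fun a1 => lsum S2 (fun a2 => lsum S1' (fun b1 => lsum S2' (fun b2 => f a1 a2 b1 b2)))).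

Lemma lsum4_minus f g :
  lsum4 (fun a1 a2 b1 b2 => f a1 a2 b1 b2 - g a1 a2 b1 b2) = lsum4 f - lsum4 g.
Proof.
  unfold lsum4. do 4 (rewrite <- lsum_minus; apply lsum_ext; intros). reflexivity.
Qed.

Lemma lsum4_le f g : (forall a1 a2 b1 b2, f a1 a2 b1 b2 <= g a1 a2 b1 b2) -> lsum4 f <= lsum4 g.
Proof. intros H. unfold lsum4. repeat (apply lsum_le; intros). auto. Qed.

Lemma lsum4_mul (F G : X -> X -> R) :
  lsum4 (fun a1 a2 b1 b2 => F a1 b1 * G a2 b2) =
  lsum S1 (fun a1 => lsum S1' (F a1)) * lsum S2 (fun a2 => lsum S2' (G a2)).
Proof.
  unfold lsum4. rewrite <- lsum_scal_r. apply lsum_ext; intros a1 _.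
  rewrite <- lsum_scal_l. apply lsum_ext; intros a2 _.
  rewrite <- lsum_scal_r. apply lsum_ext; intros b1 _.
  apply lsum_scal_l.
Qed.

End FourfoldSums.

Section ParallelCouplings.
Context {A : Type}.
Implicit Types (h e om : proc A -> proc A -> R).

Definition par_coupling (om1 om2 : proc A -> proc A -> R) (u v : proc A) : R :=
  match u, v with
  | Par B x1 x2, Par B' y1 y2 =>
      if excluded_middle_informative (B = sync_all /\ B' = sync_all)
      then om1 x1 y1 * om2 x2 y2 else 0
  | _, _ => 0
  end.

Lemma par_coupling_Par (om1 om2 : proc A -> proc A -> R) x1 x2 y1 y2 :
  par_coupling om1 om2 (Par sync_all x1 x2) (Par sync_all y1 y2) = om1 x1 y1 * om2 x2 y2.
Proof. simpl. destruct excluded_middle_informative as [_|n]; [reflexivity| exfalso; auto]. Qed.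

Lemma coupling_par mu1 mu2 mu1' mu2' S1 S2 S1' S2' om1 om2 :
  distr_on mu1 S1 -> distr_on mu2 S2 -> distr_on mu1' S1' -> distr_on mu2' S2' ->
  coupling mu1 mu1' S1 S1' om1 -> coupling mu2 mu2' S2 S2' om2 ->
  coupling (par_dist sync_all mu1 mu2) (par_dist sync_all mu1' mu2')
    (par_list sync_all S1 S2) (par_list sync_all S1' S2') (par_coupling om1 om2).
Proof.
  intros F1 F2 F1' F2' Hc1 Hc2.
  pose proof (distr_on_par sync_all _ _ _ _ F1 F2) as FP.
  pose proof (distr_on_par sync_all _ _ _ _ F1' F2') as FP'.
  destruct Hc1 as [N1 [N1' [P1 [Z1 [R1 [Y1 [C1 Y1']]]]]]].
  destruct Hc2 as [N2 [N2' [P2 [Z2 [R2 [Y2 [C2 Y2']]]]]]].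
  split; [apply FP|]. split; [apply FP'|]. split; [|split; [|split; [|split; [|split]]]].
  - intros u v; destruct u, v; simpl; try lra. destruct excluded_middle_informative; [|lra].
    apply Rmult_le_pos; auto.
  - intros u v Hn; destruct u as [| | |B x1 x2]; destruct v as [| | |B' y1 y2]; try reflexivity.
    simpl; destruct excluded_middle_informative as [[-> ->]|]; [|reflexivity].
    destruct (classic (In x1 S1 /\ In y1 S1')) as [H1|H1]; [|rewrite Z1; auto; ring].
    destruct (classic (In x2 S2 /\ In y2 S2')) as [H2|H2]; [|rewrite Z2; auto; ring].
    exfalso; apply Hn; split; apply in_par_list; tauto.
  - intros u Hu. apply in_par_list_inv in Hu. destruct Hu as [a1 [a2 [-> [Ha1 Ha2]]]].
    rewrite par_dist_Par, <- R1, <- R2, <- lsum_scal_r by auto.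
    unfold par_list; rewrite lsum_map, lsum_prod. apply lsum_ext; intros b1 _.
    rewrite <- lsum_scal_l. apply lsum_ext; intros b2 _. apply par_coupling_Par.
  - apply FP.
  - intros v Hv. apply in_par_list_inv in Hv. destruct Hv as [b1 [b2 [-> [Hb1 Hb2]]]].
    rewrite par_dist_Par, <- C1, <- C2, <- lsum_scal_r by auto.
    unfold par_list; rewrite lsum_map, lsum_prod. apply lsum_ext; intros a1 _.
    rewrite <- lsum_scal_l. apply lsum_ext; intros a2 _. apply par_coupling_Par.
  - apply FP'.
Qed.

Lemma coupling_cost_complement e mu mu' S S' om : distr_on mu S -> distr_on mu' S' ->
  coupling mu mu' S S' om ->
  lsum S (fun a => lsum S' (fun b => (1 - e a b) * om a b)) = 1 - coupling_cost e S S' om.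
Proof.
  intros F F' Hc. unfold coupling_cost.
  transitivity (lsum S (fun a => lsum S' (om a)) - lsum S (fun a => lsum S' (fun b => e a b * om a b)));
    [|rewrite (coupling_mass _ _ _ _ _ _ _ F F' Hc); reflexivity].
  rewrite <- lsum_minus. apply lsum_ext; intros.
  rewrite <- lsum_minus. apply lsum_ext; intros. ring.
Qed.

(* Coupling the components independently: the product of the two "agreement masses"
   [1 - k_i] survives in the parallel composition. *)
Lemma Kant_par_le h e mu1 mu2 mu1' mu2' S1 S2 S1' S2' om1 om2 kk :
  distr_on mu1 S1 -> distr_on mu2 S2 -> distr_on mu1' S1' -> distr_on mu2' S2' ->
  coupling mu1 mu1' S1 S1' om1 -> coupling mu2 mu2' S2 S2' om2 ->
  (forall a1 a2 b1 b2,
     h (Par sync_all a1 a2) (Par sync_all b1 b2) <= 1 - (1 - e a1 b1) * (1 - e a2 b2)) ->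
  Kant h (par_dist sync_all mu1 mu2) (par_dist sync_all mu1' mu2') kk ->
  kk <= 1 - (1 - coupling_cost e S1 S1' om1) * (1 - coupling_cost e S2 S2' om2).
Proof.
  intros F1 F2 F1' F2' Hc1 Hc2 Hh [_ Hmin].
  eapply Rle_trans; [apply Hmin, coupling_par; eauto|].
  assert (E : coupling_cost h (par_list sync_all S1 S2) (par_list sync_all S1' S2') (par_coupling om1 om2) =
    lsum4 S1 S2 S1' S2' (fun a1 a2 b1 b2 =>
      h (Par sync_all a1 a2) (Par sync_all b1 b2) * (om1 a1 b1 * om2 a2 b2))).
  { unfold coupling_cost, lsum4, par_list. rewrite lsum_map, lsum_prod.
    do 2 (apply lsum_ext; intros). cbn [fst snd]. rewrite lsum_map, lsum_prod.
    do 2 (apply lsum_ext; intros). cbn [fst snd]. rewrite par_coupling_Par; reflexivity. }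
  rewrite E. eapply Rle_trans.
  - apply (lsum4_le S1 S2 S1' S2' _ (fun a1 a2 b1 b2 =>
      om1 a1 b1 * om2 a2 b2 - ((1 - e a1 b1) * om1 a1 b1) * ((1 - e a2 b2) * om2 a2 b2))).
    intros a1 a2 b1 b2. specialize (Hh a1 a2 b1 b2).
    assert (0 <= om1 a1 b1 * om2 a2 b2) by (apply Rmult_le_pos; [apply Hc1|apply Hc2]).
    apply Rmult_le_compat_r with (r := om1 a1 b1 * om2 a2 b2) in Hh; auto. nra.
  - rewrite lsum4_minus, !lsum4_mul, (coupling_mass _ _ _ _ _ _ _ F1 F1' Hc1),
      (coupling_mass _ _ _ _ _ _ _ F2 F2' Hc2), (coupling_cost_complement e _ _ _ _ _ F1 F1' Hc1),
      (coupling_cost_complement e _ _ _ _ _ F2 F2' Hc2).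
    right; ring.
Qed.

End ParallelCouplings.

Lemma Kant_on_supports {A : Type} (h : proc A -> proc A -> R) mu mu' S S' k :
  distr_on mu S -> distr_on mu' S' -> Kant h mu mu' k ->
  exists om, coupling mu mu' S S' om /\ coupling_cost h S S' om = k.
Proof.
  intros F F' [[s [s' [om [Hc <-]]]] _].
  destruct (coupling_restrict _ _ _ _ _ _ _ F F' Hc) as [Hc' ->]; eauto.
Qed.

Section ParallelBound.
Context {A : Type}.
Variable d : proc A -> proc A -> R.
Hypothesis Hd : is_bisim_metric d.

Definition par_metric_bound (u v : proc A) : R :=
  match u, v with
  | Par B x1 x2, Par B' y1 y2 =>
      if excluded_middle_informative (B = sync_all /\ B' = sync_all)
      then 1 - (1 - d x1 y1) * (1 - d x2 y2) else 1
  | _, _ => 1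
  end.

(* A candidate prefix point of the bisimulation functional lying below [d]; Park's principle
   then forces [d] below it. *)
Definition par_metric (u v : proc A) : R := Rmin (d u v) (par_metric_bound u v).

Lemma par_metric_bounded : bounded01 par_metric.
Proof.
  intros u v; unfold par_metric. pose proof (d_bounded d Hd u v).
  assert (0 <= par_metric_bound u v <= 1).
  { destruct u as [| | |B x1 x2]; destruct v as [| | |B' y1 y2]; simpl; try lra.
    destruct excluded_middle_informative; [|lra].
    pose proof (d_bounded d Hd x1 y1); pose proof (d_bounded d Hd x2 y2). nra. }
  unfold Rmin; destruct Rle_dec; lra.
Qed.

Lemma par_metric_Par_le x1 x2 y1 y2 :
  par_metric (Par sync_all x1 x2) (Par sync_all y1 y2) <= 1 - (1 - d x1 y1) * (1 - d x2 y2).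
Proof.
  eapply Rle_trans; [apply Rmin_r|]. simpl.
  destruct excluded_middle_informative as [_|n]; [lra| exfalso; auto].
Qed.

Lemma haus_values_par_le x1 x2 y1 y2 (a : A) c : d x1 y1 < 1 -> d x2 y2 < 1 ->
  haus_values par_metric (der (Par sync_all x1 x2) a) (der (Par sync_all y1 y2) a) c ->
  c <= 1 - (1 - d x1 y1) * (1 - d x2 y2).
Proof.
  intros H1 H2 [pi [Hs Hinf]]. apply step_par_all_inv in Hs.
  destruct Hs as [mu1 [mu2 [-> [Hs1 Hs2]]]].
  apply Rle_plus_epsilon; intros eps He.
  destruct (d_transfer d Hd x1 y1 a mu1 (eps / 2) H1 Hs1) as [mu1' [k1 [Hs1' [Hk1 Hlt1]]]]; [lra|].
  destruct (d_transfer d Hd x2 y2 a mu2 (eps / 2) H2 Hs2) as [mu2' [k2 [Hs2' [Hk2 Hlt2]]]]; [lra|].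
  destruct (step_distr_on _ _ _ Hs1) as [S1 F1], (step_distr_on _ _ _ Hs2) as [S2 F2].
  destruct (step_distr_on _ _ _ Hs1') as [S1' F1'], (step_distr_on _ _ _ Hs2') as [S2' F2'].
  pose proof (Kant_bounded d _ _ _ _ k1 (d_bounded d Hd) F1 F1' Hk1).
  pose proof (Kant_bounded d _ _ _ _ k2 (d_bounded d Hd) F2 F2' Hk2).
  destruct (Kant_on_supports d _ _ _ _ _ F1 F1' Hk1) as [om1 [Hc1 <-]].
  destruct (Kant_on_supports d _ _ _ _ _ F2 F2' Hk2) as [om2 [Hc2 <-]].
  destruct (Kant_exists par_metric (par_dist sync_all mu1 mu2) (par_dist sync_all mu1' mu2') _ _
              (distr_on_par sync_all _ _ _ _ F1 F2) (distr_on_par sync_all _ _ _ _ F1' F2'))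
    as [kk Hkk].
  assert (Hc : c <= kk).
  { apply (inf_lb _ _ _ Hinf). exists (par_dist sync_all mu1' mu2'); split; auto.
    apply st_sync; auto; exact I. }
  pose proof (Kant_par_le par_metric d _ _ _ _ _ _ _ _ _ _ kk F1 F2 F1' F2' Hc1 Hc2
                par_metric_Par_le Hkk) as Hpar.
  pose proof (d_bounded d Hd x1 y1); pose proof (d_bounded d Hd x2 y2).
  set (k1 := coupling_cost d S1 S1' om1) in *. set (k2 := coupling_cost d S2 S2' om2) in *.
  assert (- (eps / 2) <= (d x1 y1 - k1) * (1 - k2)) by nra.
  assert (- (eps / 2) <= (1 - d x1 y1) * (d x2 y2 - k2)) by nra.
  nra.
Qed.

Lemma par_metric_prefix_point : prefix_point par_metric.
Proof.
  split; [apply par_metric_bounded|]. intros u v w Hw.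
  apply Rmin_glb.
  - apply (Bfun_mono par_metric d u v w (d u v) par_metric_bounded (d_bounded d Hd));
      [intros; apply Rmin_l| exact Hw| apply (d_fixpoint d Hd)].
  - pose proof (Bfun_bounded par_metric u v w par_metric_bounded Hw).
    destruct u as [| | |B x1 x2]; destruct v as [| | |B' y1 y2]; simpl; try lra.
    destruct excluded_middle_informative as [[-> ->]|]; [|lra].
    pose proof (d_bounded d Hd x1 y1) as B1. pose proof (d_bounded d Hd x2 y2) as B2.
    destruct (Rlt_dec (d x1 y1) 1) as [L1|L1]; [|assert (d x1 y1 = 1) by lra; nra].
    destruct (Rlt_dec (d x2 y2) 1) as [L2|L2]; [|assert (d x2 y2 = 1) by lra; nra].
    apply (Bfun_le _ _ _ _ _ Hw); [nra| |]; intros b c Hc.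
    + apply (haus_values_par_le x1 x2 y1 y2 b); auto.
    + rewrite (bisim_metric_sym d x1 y1 Hd), (bisim_metric_sym d x2 y2 Hd).
      apply (haus_values_par_le y1 y2 x1 x2 b); auto; rewrite (bisim_metric_sym d _ _ Hd); auto.
Qed.

Lemma d_Par_le p1 p2 q1 q2 :
  d (Par sync_all p1 p2) (Par sync_all q1 q2) <= 1 - (1 - d p1 q1) * (1 - d p2 q2).
Proof.
  eapply Rle_trans; [apply (bisim_metric_le_prefix_point d par_metric Hd par_metric_prefix_point)|].
  apply par_metric_Par_le.
Qed.

End ParallelBound.

Lemma prod_upto_eq1 n f : (forall y, (y < n)%nat -> f y = 1) -> prod_upto n f = 1.
Proof.
  induction n as [|n IH]; intros H; simpl; auto.
  rewrite IH, H; [ring|lia|intros; apply H; lia].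
Qed.

Lemma prod_upto_mul n f g : prod_upto n (fun y => f y * g y) = prod_upto n f * prod_upto n g.
Proof. induction n as [|n IH]; simpl; [ring|]. rewrite IH; ring. Qed.

Lemma prod_upto_ext n f g : (forall y, f y = g y) -> prod_upto n f = prod_upto n g.
Proof. induction n as [|n IH]; intros H; simpl; auto. rewrite IH, H; auto. Qed.

Lemma prod_upto_ge0 n f : (forall y, 0 <= f y) -> 0 <= prod_upto n f.
Proof. induction n as [|n IH]; intros H; simpl; [lra|]. apply Rmult_le_pos; auto. Qed.

Lemma prod_upto_widen n n' f : (forall y, (n <= y)%nat -> f y = 1) -> (n <= n')%nat ->
  prod_upto n' f = prod_upto n f.
Proof. intros H; induction 1; auto. simpl. rewrite IHle, H; [ring| lia]. Qed.

Lemma mult_ge_vbound {A : Type} (t : dterm A) y : (vbound t <= y)%nat -> mult t y = 0%nat.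
Proof.
  induction t as [x| |a t IH|t1 IH1 t2 IH2]; simpl; intros H; auto.
  - destruct (Nat.eqb_spec x y); [lia|auto].
  - rewrite IH1, IH2; lia.
Qed.

Section Agreement.
Context {A : Type}.
Variable e : nat -> R.

(* [dda (mult t) (vbound t) e = 1 - agreement t]. *)
Definition agreement (t : dterm A) : R := prod_upto (vbound t) (fun y => (1 - e y) ^ mult t y).

Lemma agreement_DVar x : agreement (DVar A x) = 1 - e x.
Proof.
  unfold agreement; simpl. rewrite Nat.eqb_refl, prod_upto_eq1; [ring|].
  intros y Hy. destruct (Nat.eqb_spec x y); [lia| reflexivity].
Qed.

Lemma agreement_DPar t1 t2 : agreement (DPar t1 t2) = agreement t1 * agreement t2.
Proof.
  unfold agreement; cbn [vbound mult].
  rewrite (prod_upto_ext _ _ (fun y => (1 - e y) ^ mult t1 y * (1 - e y) ^ mult t2 y))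
    by (intros; apply pow_add).
  rewrite prod_upto_mul; f_equal; apply prod_upto_widen; try lia;
    intros y Hy; rewrite mult_ge_vbound; auto.
Qed.

Lemma agreement_ge0 t : (forall y, e y <= 1) -> 0 <= agreement t.
Proof. intros H; apply prod_upto_ge0; intros y; apply pow_le; specialize (H y); lra. Qed.

End Agreement.

Theorem proposition2 (A : Type)
  (HA : exists f : A -> nat, forall a b, f a = f b -> a = b)
  (d : proc A -> proc A -> R) (Hd : is_bisim_metric d)
  (t : dterm A) (sigma1 sigma2 : nat -> proc A)
  (Hs : forall x : nat, d (sigma1 x) (sigma2 x) < 1) :
  d (dsubst sigma1 t) (dsubst sigma2 t)
    <= dda (mult t) (vbound t) (fun x => d (sigma1 x) (sigma2 x)).
Proof.
  set (e := fun x => d (sigma1 x) (sigma2 x)).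
  assert (He : forall y, e y <= 1) by (intros y; apply Rlt_le, Hs).
  change (d (dsubst sigma1 t) (dsubst sigma2 t) <= 1 - agreement e t).
  induction t as [x| |a t IH|t1 IH1 t2 IH2]; cbn [dsubst].
  - rewrite agreement_DVar; unfold e; lra.
  - rewrite (d_Nil d Hd); unfold agreement; simpl; lra.
  - eapply Rle_trans; [apply (d_Pref_one d Hd)|exact IH].
  - eapply Rle_trans; [apply (d_Par_le d Hd)|]. rewrite agreement_DPar.
    pose proof (agreement_ge0 e t1 He); pose proof (agreement_ge0 e t2 He).
    apply Rplus_le_compat_l, Ropp_le_contravar, Rmult_le_compat; lra.
Qed.
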